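(* Let $\mathcal{F}=(\{F_i\}_{i\in\mathscr V},\{F_k\}_{k\in\mathscr E})$ be a factorization inverse system of fields with inverse limit $F$, and let $E=F[X]/(f)$ be a finite separable field extension, $f\in F[X]$ monic irreducible. For $i\in\mathscr V$ (resp. $k\in\mathscr E$) let $f=\prod_{i'\in\mathscr V_i}f_{i'}$ (resp. $f=\prod_{k'\in\mathscr E_k}f_{k'}$) be the factorization into monic irreducibles in $F_i[X]$ (resp. $F_k[X]$), and set $E_{i'}=F_i[X]/(f_{i'})$, $E_{k'}=F_k[X]/(f_{k'})$. Let $\Gamma'=(\mathscr V',\mathscr E')$ with $\mathscr V'=\bigsqcup_i\mathscr V_i$, $\mathscr E'=\bigsqcup_k\mathscr E_k$, where $k'\in\mathscr E_k$ is incident to $i'\in\mathscr V_i$ iff $k$ is incident to $i$ and $f_{k'}$ divides $f_{i'}$ in $F_k[X]$ (giving an inclusion $E_{i'}\hookrightarrow E_{k'}$ extending $F_i\hookrightarrow F_k$), oriented so that $l(k')\in\mathscr V_{l(k)}$ and $r(k')\in\mathscr V_{r(k)}$. Then $\mathcal E=(\{E_{i'}\}_{i'\in\mathscr V'},\{E_{k'}\}_{k'\in\mathscr E'})$ is a factorization inverse system of fields with inverse limit $E$. If patching for finite-dimensional vector spaces holds over $\mathcal F$, then it holds over $\mathcal E$.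
   Context: A factorization inverse system of fields $\mathcal{F}=(\{F_i\}_{i\in\mathscr V},\{F_k\}_{k\in\mathscr E})$ consists of a finite nonempty graph $\Gamma=(\mathscr V,\mathscr E)$ (multiple edges allowed, no loops), fields $F_i$ ($i\in\mathscr V$), $F_k$ ($k\in\mathscr E$), and field inclusions $F_i\hookrightarrow F_k$ whenever edge $k$ is incident to vertex $i$, such that the inverse limit in commutative rings is a field $F$ (i.e. $F\to\prod_iF_i\rightrightarrows\prod_kF_k$ is an equalizer). The graph is oriented: each edge $k$ has a head $l(k)$ and a tail $r(k)$. Patching for finite-dimensional vector spaces holds over $\mathcal{F}$ if for every $n\ge1$ and every $(g_k)_{k}\in\prod_{k\in\mathscr E}\mathrm{GL}_n(F_k)$ there exists $(g'_i)_i\in\prod_{i\in\mathscr V}\mathrm{GL}_n(F_i)$ with $g_k=(g'_{r(k)})^{-1}g'_{l(k)}$ for all $k$. *)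

From HB Require Import structures.
From mathcomp Require Import all_boot all_order all_algebra all_field.
Set Implicit Arguments. Unset Strict Implicit. Unset Printing Implicit Defensive.
Import GRing.Theory.
Local Open Scope ring_scope.

(* An oriented finite graph: vertices V, edges Ed, head l and tail r.
   Each edge k is incident exactly to l k and r k. *)

Definition is_inverse_limit (V Ed : finType) (l r : Ed -> V)
  (FV : V -> fieldType) (FE : Ed -> fieldType)
  (jl : forall k, {rmorphism FV (l k) -> FE k})
  (jr : forall k, {rmorphism FV (r k) -> FE k})
  (F : fieldType) (phi : forall i, {rmorphism F -> FV i}) : Prop :=
  [/\ (forall k x, jl k (phi (l k) x) = jr k (phi (r k) x)),
      (forall x y : F, (forall i, phi i x = phi i y) -> x = y) &
      (forall a : forall i, FV i,
          (forall k, jl k (a (l k)) = jr k (a (r k))) ->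
          exists x : F, forall i, phi i x = a i)].

Definition is_FIS (V Ed : finType) (l r : Ed -> V)
  (FV : V -> fieldType) (FE : Ed -> fieldType)
  (jl : forall k, {rmorphism FV (l k) -> FE k})
  (jr : forall k, {rmorphism FV (r k) -> FE k})
  (F : fieldType) (phi : forall i, {rmorphism F -> FV i}) : Prop :=
  [/\ (0 < #|V|)%N, (forall k, l k != r k) &
      is_inverse_limit jl jr phi].

Definition patching (V Ed : finType) (l r : Ed -> V)
  (FV : V -> fieldType) (FE : Ed -> fieldType)
  (jl : forall k, {rmorphism FV (l k) -> FE k})
  (jr : forall k, {rmorphism FV (r k) -> FE k}) : Prop :=
  forall n : nat, (0 < n)%N ->
  forall g : forall k, 'M[FE k]_n, (forall k, g k \in unitmx) ->
  exists g' : forall i, 'M[FV i]_n,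
    (forall i, g' i \in unitmx) /\
    (forall k, g k = invmx (map_mx (jr k) (g' (r k))) *m map_mx (jl k) (g' (l k))).

(* L together with iota : K -> L and t : L is (a presentation of) K[X]/(p):
   the K-algebra map K[X] -> L, X |-> t, is surjective with kernel (p). *)
Definition presents (K L : fieldType) (iota : {rmorphism K -> L}) (t : L)
  (p : {poly K}) : Prop :=
  (forall y : L, exists q : {poly K}, y = (map_poly iota q).[t]) /\
  (forall q : {poly K}, (map_poly iota q).[t] = 0 <-> p %| q).

From HB Require Import structures.
From mathcomp Require Import all_boot all_order all_algebra all_field.
From mathcomp Require Import ring.
Set Implicit Arguments. Unset Strict Implicit. Unset Printing Implicit Defensive.
Import GRing.Theory.
Local Open Scope ring_scope.

(* Write [d] for the degree of [f] and [E_i = F_i[X]/(f) = prod_b E_(i,b)],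
   [E_k = F_k[X]/(f) = prod_a E_(k,a)].  Each factor [f_(k,a)] divides the image of
   exactly one [f_(i,b)] because [f] stays separable, which gives the graph [Gamma']
   and the embeddings [E_(i,b) -> E_(k,a)].  That [E] is the inverse limit follows
   coefficientwise: by the Chinese remainder theorem a compatible family of
   elements of the [E_(i,b)] is given by polynomials of degree [< d] over the [F_i]
   which agree on edges, hence descend to [F].
   For patching, the given [g_(k,a)] in [GL_n(E_(k,a))] assemble, again by Chinese
   remaindering, into a single [F_k[X]/(f)]-linear automorphism [G_k] of
   [(F_k[X]/(f))^n = F_k^(n d)], i.e. a matrix of [GL_(n d)(F_k)] commuting with
   the multiplication [X] by [X].  Patching over [F] gives [G_k = G'_r^-1 G'_l].
   The conjugates [G'_i X G'_i^-1] agree on edges, so they descend to a matrix [S]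
   over [F] with [f(S) = 0], which makes [F^(n d)] an [E]-vector space of
   dimension [n].  An [E]-basis yields [B] with [B S = X B]; then [H_i = B G'_i]
   commutes with [X], so it is [E_i]-linear, and its components over the factors
   [E_(i,b)] solve the patching problem for the [g_(k,a)]. *)

(** * Divisibility by separable products *)

Section PolyDivisibility.
Variable R : fieldType.
Implicit Types p q x y : {poly R}.

Lemma modp_eq_dvd p x y : p %| x - y -> x %% p = y %% p.
Proof. by move=> /modp_eq0 dxy; apply/eqP; rewrite -subr_eq0 -modpN -modpD dxy. Qed.

Lemma dvdp_size_lt_eq0 p q : (size q < size p)%N -> p %| q -> q = 0.
Proof.
move=> lt_qp dvd_pq; apply/eqP; apply: contraTT lt_qp => /dvdp_leq/(_ dvd_pq).
by rewrite leqNgt.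
Qed.

Lemma dvdp_sum (I : Type) (s : seq I) (P : pred I) (G : I -> {poly R}) q :
  (forall i, P i -> q %| G i) -> q %| \sum_(i <- s | P i) G i.
Proof.
by move=> dG; apply: (big_ind (fun z => q %| z)); [exact: dvdp0 | exact: dvdp_add |].
Qed.

Lemma horner_map_modp (K : fieldType) (io : {rmorphism R -> K}) t p x :
  (map_poly io p).[t] = 0 -> (map_poly io (x %% p)).[t] = (map_poly io x).[t].
Proof.
move=> pt0; rewrite [in RHS](divp_eq x p) rmorphD rmorphM /=.
by rewrite hornerD hornerM pt0 mulr0 add0r.
Qed.

Section SeparableProduct.
Variables (I : eqType) (s : seq I) (g : I -> {poly R}).
Hypothesis sep_g : separable_poly (\prod_(i <- s) g i).

Lemma dvdp_sep_prod x : (forall i, i \in s -> g i %| x) -> \prod_(i <- s) g i %| x.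
Proof.
elim: s sep_g => [|a s' IH]; first by rewrite big_nil dvd1p.
rewrite big_cons separable_mul => /and3P[_ sep' cop] dg.
rewrite Gauss_dvdp // dg ?mem_head //= IH // => i si.
by apply: dg; rewrite in_cons si orbT.
Qed.

Lemma chinese_sep_prod (y : I -> {poly R}) :
  exists z, forall i, i \in s -> g i %| z - y i.
Proof.
elim: s sep_g => [|a s' IH]; first by exists 0.
rewrite big_cons separable_mul => /and3P[_ sep' cop].
have [z zP] := IH sep'; have [[u v] /= uv1] := Bezout_eq1_coprimepP _ _ cop.
set P := \prod_(i <- s') g i in uv1 zP cop *.
exists (y a * (v * P) + z * (u * g a)) => i; rewrite in_cons => /orP[/eqP->|si].
  have -> : y a * (v * P) + z * (u * g a) - y a = (z - y a) * u * g a.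
    by rewrite -[v * P](addKr (u * g a)) uv1; ring.
  exact: dvdp_mull.
have gP : g i %| P by rewrite /P (big_rem i si) /= dvdp_mulr.
have -> : y a * (v * P) + z * (u * g a) - y i = (z - y i) + (y a - z) * v * P.
  by rewrite -[u * g a](addrK (v * P)) uv1; ring.
by rewrite dvdp_add ?zP // dvdp_mull.
Qed.

End SeparableProduct.

Lemma irreducible_dvdp_prod (I : eqType) (s : seq I) (g : I -> {poly R}) q :
  irreducible_poly q -> q %| \prod_(i <- s) g i -> exists2 i, i \in s & q %| g i.
Proof.
move=> irr_q; elim: s => [|a s IH].
  by rewrite big_nil dvdp1 => /eqP q1; case: irr_q; rewrite q1.
rewrite big_cons; have [dga|ndga] := boolP (q %| g a); first by exists a; rewrite ?mem_head.
rewrite Gauss_dvdpr ?irreducible_poly_coprime // => /IH[i si dgi].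
by exists i; rewrite // in_cons si orbT.
Qed.

Lemma sep_prod_dvdp_inj (I : finType) (g : I -> {poly R}) q i j :
  separable_poly (\prod_i g i) -> (1 < size q)%N -> q %| g i -> q %| g j -> i = j.
Proof.
move=> sep_g q_gt1 dgi dgj; apply/eqP; apply: contraTT isT => neq_ij.
have : g i * g j %| \prod_k g k.
  by rewrite (bigD1 i) //= (bigD1 j) 1?eq_sym //= mulrA dvdp_mulr.
move/(separable_coprime sep_g) => cop_ij.
have : coprimep q q.
  apply: (coprimep_dvdl dgj); rewrite coprimep_sym.
  by apply: (coprimep_dvdl dgi); rewrite coprimep_sym.
by rewrite coprimepp => /eqP q1; rewrite q1 in q_gt1.
Qed.

End PolyDivisibility.

Lemma sep_factor_match (K L : fieldType) (j : {rmorphism K -> L}) n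
    (g : 'I_n -> {poly K}) (h : {poly L}) :
  separable_poly (map_poly j (\prod_(b < n) g b)) -> irreducible_poly h ->
  h %| map_poly j (\prod_(b < n) g b) -> {b | forall b', h %| map_poly j (g b') <-> b' = b}.
Proof.
rewrite rmorph_prod => sep_g irr_h dvd_h.
case: (pickP (fun b => h %| map_poly j (g b))) => [b hb | none]; last first.
  by exfalso; have [b _] := irreducible_dvdp_prod irr_h dvd_h; rewrite none.
exists b => b'; split=> [hb' | ->] //.
exact: (sep_prod_dvdp_inj sep_g irr_h.1 hb' hb).
Qed.

(** * Morphisms out of a presented extension [K[X]/(p)] *)

Section PresentationLift.
Variables (K L M : fieldType) (iota : {rmorphism K -> L}) (theta : L) (p : {poly K}).
Hypothesis presL : presents iota theta p.
Variables (sigma : {rmorphism K -> M}) (mu : M).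
Hypothesis root_mu : (map_poly sigma p).[mu] = 0.

Lemma presents_surj y : exists q, y == (map_poly iota q).[theta].
Proof. by have [q ->] := presL.1 y; exists q. Qed.

Definition plift_fun (y : L) : M := (map_poly sigma (xchoose (presents_surj y))).[mu].

Lemma plift_funE q : plift_fun (map_poly iota q).[theta] = (map_poly sigma q).[mu].
Proof.
rewrite /plift_fun; set y := (map_poly iota q).[theta].
have /eqP eq_q' := xchooseP (presents_surj y); set q' := xchoose _ in eq_q' *.
have /(presL.2 _)/dvdpP[c Ec] : (map_poly iota (q' - q)).[theta] = 0.
  by rewrite rmorphB hornerD hornerN -eq_q' subrr.
apply/eqP; rewrite -subr_eq0 -hornerN -hornerD -rmorphB Ec.
by rewrite rmorphM hornerM root_mu mulr0.
Qed.

Lemma plift_is_nmod_morphism : (plift_fun 0 = 0) * {morph plift_fun : x y / x + y}.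
Proof.
split; first by have := plift_funE 0; rewrite !rmorph0 !horner0.
move=> x y; have [qx ->] := presL.1 x; have [qy ->] := presL.1 y.
by rewrite -hornerD -rmorphD !plift_funE rmorphD hornerD.
Qed.

Lemma plift_is_monoid_morphism : GRing.monoid_morphism plift_fun.
Proof.
split; first by have := plift_funE 1; rewrite !rmorph1 !hornerC.
move=> x y; have [qx ->] := presL.1 x; have [qy ->] := presL.1 y.
by rewrite -hornerM -rmorphM !plift_funE rmorphM hornerM.
Qed.

HB.instance Definition _ := GRing.isNmodMorphism.Build L M plift_fun plift_is_nmod_morphism.
HB.instance Definition _ :=
  GRing.isMonoidMorphism.Build L M plift_fun plift_is_monoid_morphism.

Definition plift : {rmorphism L -> M} := plift_fun.

Lemma pliftE q : plift (map_poly iota q).[theta] = (map_poly sigma q).[mu].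
Proof. exact: plift_funE. Qed.

Lemma plift_iota x : plift (iota x) = sigma x.
Proof. by have := pliftE x%:P; rewrite !map_polyC !hornerC. Qed.

Lemma plift_theta : plift theta = mu.
Proof. by have := pliftE 'X; rewrite !map_polyX !hornerX. Qed.

End PresentationLift.

(** * The regular representation of [(R[X]/(p))^n] *)

Lemma row_mx_ext (R : pzRingType) k m (A B : 'M[R]_(k, m)) :
  (forall u : 'rV_k, u *m A = u *m B) -> A = B.
Proof. by move=> eqAB; apply/row_matrixP => i; rewrite !rowE eqAB. Qed.

(* [(R[X]/(p))^n] is modelled as [n x d] matrices over [R], row [s] holding the
   coefficients of the [s]-th coordinate; [regmx Q] is the [R]-linear map of
   [R^(n * d)] given by right multiplication with a polynomial matrix [Q]. *)
Section RegularRepresentation.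
Variables (R : fieldType) (p : {poly R}) (n d : nat).
Hypothesis size_p : size p = d.+1.
Implicit Types (Q : 'M[{poly R}]_n) (M : 'M[R]_(n, d)).

Definition rowpoly M (s : 'I_n) : {poly R} := rVpoly (row s M).

Definition regact Q M : 'M[R]_(n, d) :=
  \matrix_(s < n) poly_rV ((\sum_t rowpoly M t * Q t s) %% p).

Lemma size_modp_le (x : {poly R}) : (size (x %% p)%R <= d)%N.
Proof. by rewrite -ltnS -size_p ltn_modp -size_poly_gt0 size_p. Qed.

Lemma rowpoly_regact Q M s : rowpoly (regact Q M) s = (\sum_t rowpoly M t * Q t s) %% p.
Proof. by rewrite /rowpoly rowK poly_rV_K // size_modp_le. Qed.

Lemma rowpoly_inj M M' : (forall s, rowpoly M s = rowpoly M' s) -> M = M'.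
Proof.
move=> eqMM'; apply/row_matrixP => s.
by rewrite -(rVpolyK (row s M)) -(rVpolyK (row s M')) -/(rowpoly M s) eqMM'.
Qed.

Lemma rowpolyD M M' s : rowpoly (M + M') s = rowpoly M s + rowpoly M' s.
Proof. by rewrite /rowpoly !linearD. Qed.

Lemma rowpolyZ a M s : rowpoly (a *: M) s = a *: rowpoly M s.
Proof. by rewrite /rowpoly !linearZ. Qed.

Lemma rowpoly_sum (I : finType) (a : I -> R) (Ms : I -> 'M[R]_(n, d)) s :
  rowpoly (\sum_i a i *: Ms i) s = \sum_i a i *: rowpoly (Ms i) s.
Proof. by rewrite /rowpoly !linear_sum; apply: eq_bigr => i _; rewrite !linearZ. Qed.

Lemma rowpoly_delta (t s : 'I_n) (j : 'I_d) :
  rowpoly (delta_mx t j) s = (s == t)%:R *: 'X^j.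
Proof.
rewrite /rowpoly -rVpoly_delta -linearZ; congr rVpoly.
by apply/rowP => k; rewrite !mxE eq_sym; case: (t == s); rewrite ?mulr1n ?mulr0n ?mul1r ?mul0r.
Qed.

Lemma regact_is_semilinear Q : semilinear (regact Q).
Proof.
split=> [a M | M M']; apply: rowpoly_inj => s.
  rewrite rowpolyZ !rowpoly_regact -modpZl scaler_sumr.
  by congr (_ %% _); apply: eq_bigr => t _; rewrite rowpolyZ scalerAl.
rewrite rowpolyD !rowpoly_regact -modpD -big_split.
by congr (_ %% _); apply: eq_bigr => t _; rewrite rowpolyD mulrDl.
Qed.

HB.instance Definition _ Q := GRing.isSemilinear.Build R 'M[R]_(n, d) 'M[R]_(n, d) _
  (regact Q) (regact_is_semilinear Q).

Definition regmx Q : 'M[R]_(n * d) := lin_mx (regact Q).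

Definition regX : 'M[R]_(n * d) := regmx 'X%:M.

Lemma mul_regmx Q M : mxvec M *m regmx Q = mxvec (regact Q M).
Proof. exact: mul_vec_lin. Qed.

Lemma vec_mul_regmx Q u : vec_mx (u *m regmx Q) = regact Q (vec_mx u).
Proof. by rewrite -{1}(vec_mxK u) mul_regmx mxvecK. Qed.

Lemma eq_regmx Q Q' : (forall M, regact Q M = regact Q' M) -> regmx Q = regmx Q'.
Proof. by move=> eqQ; apply: row_mx_ext => u; rewrite -(vec_mxK u) !mul_regmx eqQ. Qed.

Lemma modp_sum_mull (I : finType) (X Y : I -> {poly R}) :
  (\sum_i (X i %% p) * Y i) %% p = (\sum_i X i * Y i) %% p.
Proof.
apply: modp_eq_dvd; rewrite -sumrB; apply: dvdp_sum => i _.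
rewrite -mulrBl dvdp_mulr //.
have -> : X i %% p - X i = - (X i %/ p) * p.
  by rewrite [X in _ - X](divp_eq (X i) p); ring.
exact: dvdp_mull.
Qed.

Lemma regact_mul Q Q' M : regact Q' (regact Q M) = regact (Q *m Q') M.
Proof.
apply: rowpoly_inj => u; rewrite !rowpoly_regact.
under eq_bigr do rewrite rowpoly_regact.
rewrite modp_sum_mull; congr (_ %% _).
under eq_bigr do rewrite mulr_suml.
rewrite exchange_big /=; apply: eq_bigr => t _.
by rewrite mxE mulr_sumr; apply: eq_bigr => s _; rewrite mulrA.
Qed.

Lemma regmxM Q Q' : regmx Q *m regmx Q' = regmx (Q *m Q').
Proof.
by apply: row_mx_ext => u; rewrite -(vec_mxK u) mulmxA !mul_regmx regact_mul.
Qed.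

Lemma regact_scalar c M : regact (c%:P)%:M M = c *: M.
Proof.
apply: rowpoly_inj => s; rewrite rowpoly_regact rowpolyZ (bigD1 s) //= big1.
  rewrite addr0 mxE eqxx mulr1n mulrC mul_polyC modp_small //.
  by rewrite (leq_ltn_trans (size_scale_leq _ _)) // size_p ltnS size_poly.
by move=> t /negPf neq_ts; rewrite mxE neq_ts mulr0n mulr0.
Qed.

Lemma regmx_scalar c : regmx (c%:P)%:M = c%:M.
Proof.
apply: row_mx_ext => u.
by rewrite -(vec_mxK u) mul_regmx regact_scalar mul_mx_scalar linearZ.
Qed.

Lemma regmx1 : regmx 1%:M = 1%:M.
Proof. by rewrite -regmx_scalar. Qed.

Lemma regmxD Q Q' : regmx (Q + Q') = regmx Q + regmx Q'.
Proof.
apply: row_mx_ext => u; rewrite -(vec_mxK u) mulmxDr !mul_regmx -linearD /=.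
congr mxvec; apply: rowpoly_inj => s; rewrite rowpolyD !rowpoly_regact -modpD -big_split.
by congr (_ %% _); apply: eq_bigr => t _; rewrite mxE mulrDr.
Qed.

Lemma regmx_mod Q Q' : (forall t s, p %| Q t s - Q' t s) -> regmx Q = regmx Q'.
Proof.
move=> dQ; apply: eq_regmx => M; apply: rowpoly_inj => s; rewrite !rowpoly_regact.
by apply: modp_eq_dvd; rewrite -sumrB; apply: dvdp_sum => t _; rewrite -mulrBr dvdp_mull.
Qed.

Lemma regX_comm Q : regX *m regmx Q = regmx Q *m regX.
Proof. by rewrite /regX !regmxM scalar_mxC. Qed.

Lemma rowpoly_regactX M s : rowpoly (regact 'X%:M M) s = (rowpoly M s * 'X) %% p.
Proof.
rewrite rowpoly_regact (bigD1 s) //= big1 ?addr0; first by rewrite mxE eqxx mulr1n.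
by move=> t neq_ts; rewrite mxE (negPf neq_ts) mulr0n mulr0.
Qed.

Lemma regactX_delta (t : 'I_n) (j j' : 'I_d) : j' = j.+1 :> nat ->
  regact 'X%:M (delta_mx t j) = delta_mx t j'.
Proof.
move=> j'E; apply: rowpoly_inj => s; rewrite rowpoly_regactX !rowpoly_delta.
rewrite -scalerAl -exprSr -j'E modpZl modp_small //.
by rewrite size_polyXn size_p ltnS.
Qed.

End RegularRepresentation.

Section RegularMap.
Variables (R R' : fieldType) (sig : {rmorphism R -> R'}) (p : {poly R}) (n d : nat).

Lemma map_regact (Q : 'M[{poly R}]_n) (M : 'M[R]_(n, d)) :
  map_mx sig (regact p Q M) =
  regact (map_poly sig p) (map_mx (map_poly sig) Q) (map_mx sig M).
Proof.
apply/row_matrixP => s; rewrite -map_row /regact !rowK.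
apply/rowP => j; rewrite !mxE -coef_map map_modp rmorph_sum.
congr ((_ %% _)`_ j); apply: eq_bigr => t _.
by rewrite rmorphM /= /rowpoly map_rVpoly map_row mxE.
Qed.

Lemma map_regmx (Q : 'M[{poly R}]_n) :
  map_mx sig (regmx p d Q) = regmx (map_poly sig p) d (map_mx (map_poly sig) Q).
Proof. by apply: map_lin1_mx => v /=; rewrite map_mxvec map_regact map_vec_mx. Qed.

Lemma map_regX : map_mx sig (regX p n d) = regX (map_poly sig p) n d.
Proof.
rewrite /regX map_regmx; congr regmx; apply/matrixP => i j.
by rewrite !mxE rmorphMn /= map_polyX.
Qed.

End RegularMap.

Lemma horner_regX (R : fieldType) (p : {poly R}) n d (q : {poly R}) :
  size p = d.+2 -> horner_mx (regX p n.+1 d.+1) q = regmx p d.+1 (q%:M : 'M_n.+1).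
Proof.
move=> size_p; elim/poly_ind: q => [|q c IH].
  by rewrite rmorph0 -polyC0 regmx_scalar //; apply/matrixP => i j; rewrite !mxE mul0rn.
rewrite rmorphD rmorphM /= horner_mx_X horner_mx_C IH.
transitivity (regmx p d.+1 (q%:M : 'M_n.+1) *m regmx p d.+1 'X%:M
              + regmx p d.+1 ((c%:P)%:M : 'M_n.+1)); first by rewrite regmx_scalar.
by rewrite regmxM // -regmxD // -scalar_mxM -raddfD.
Qed.

Lemma horner_regX_root (R : fieldType) (p : {poly R}) n d :
  size p = d.+2 -> horner_mx (regX p n.+1 d.+1) p = 0.
Proof.
move=> size_p; rewrite horner_regX // (@regmx_mod _ _ _ _ size_p _ (0%:P)%:M) // => [|t s].
  by rewrite regmx_scalar //; apply/matrixP => i j; rewrite !mxE mul0rn.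
by rewrite !mxE; case: (t == s); rewrite ?mulr1n ?mulr0n ?subr0 ?subrr ?dvdpp ?dvdp0.
Qed.

(** * Base change along a root of [p] *)

Lemma invmxM (R : comUnitRingType) n (A B : 'M[R]_n) :
  A \in unitmx -> B \in unitmx -> invmx (A *m B) = invmx B *m invmx A.
Proof.
move=> Au Bu; have ABu : A *m B \in unitmx by rewrite unitmx_mul Au.
by rewrite -[RHS]mul1mx -(mulVmx ABu) -!mulmxA (mulKVmx Bu) (mulmxV Au) mulmx1.
Qed.

Lemma eq_semilinear_delta (R K : fieldType) (io : {rmorphism R -> K}) m n k l
    (F1 F2 : 'M[R]_(m, n) -> 'M[K]_(k, l)) :
  (forall M N, F1 (M + N) = F1 M + F1 N) -> (forall a M, F1 (a *: M) = io a *: F1 M) ->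
  (forall M N, F2 (M + N) = F2 M + F2 N) -> (forall a M, F2 (a *: M) = io a *: F2 M) ->
  (forall i j, F1 (delta_mx i j) = F2 (delta_mx i j)) -> forall M, F1 M = F2 M.
Proof.
move=> F1D F1Z F2D F2Z eq_delta M; rewrite (matrix_sum_delta M).
have F0 F : (forall a M, F (a *: M) = io a *: F M) -> F 0 = 0.
  by move=> FZ; rewrite -(scale0r 0) FZ rmorph0 scale0r.
have big_eq (I : finType) (G : I -> 'M[R]_(m, n)) :
    (forall i, F1 (G i) = F2 (G i)) -> F1 (\sum_i G i) = F2 (\sum_i G i).
  move=> eqG; apply: (big_ind (fun X => F1 X = F2 X)); rewrite ?F0 // => X Y eqX eqY.
  by rewrite F1D F2D eqX eqY.
by apply: (big_eq) => i; apply: (big_eq) => j; rewrite F1Z F2Z eq_delta.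
Qed.

Section Descent.
Variables (R K : fieldType) (io : {rmorphism R -> K}) (th : K) (n d' : nat).
Local Notation d := d'.+1.

Let io_th_comm : commr_rmorph io th := fun a => mulrC th (io a).

Definition evalp : {poly R} -> K := horner_morph io_th_comm.
HB.instance Definition _ := GRing.RMorphism.copy evalp (horner_morph io_th_comm).
HB.instance Definition _ := GRing.Linear.copy evalp (horner_morph io_th_comm).

Definition evalmx (Q : 'M[{poly R}]_n) : 'M[K]_n := map_mx evalp Q.

Definition evrow (M : 'M[R]_(n, d)) : 'rV[K]_n := \row_s evalp (rowpoly M s).

(* When [th] is a root of [p] and [H] commutes with [regX p], [H] is the matrix
   of an [R[X]/(p)]-linear map; [descmx H] is the matrix of its base change along
   [R[X]/(p) -> K], read off on the basis vectors [delta_mx t 0] of [(R[X]/(p))^n]. *)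
Definition descmx (H : 'M[R]_(n * d)) : 'M[K]_n :=
  \matrix_(t < n) evrow (vec_mx (mxvec (delta_mx t 0 : 'M[R]_(n, d)) *m H)).

Lemma evalmxM (Q Q' : 'M[{poly R}]_n) : evalmx (Q *m Q') = evalmx Q *m evalmx Q'.
Proof. exact: map_mxM. Qed.

Lemma evrowD M N : evrow (M + N) = evrow M + evrow N.
Proof. by apply/rowP => s; rewrite !mxE rowpolyD rmorphD. Qed.

Lemma evrowZ a M : evrow (a *: M) = io a *: evrow M.
Proof. by apply/rowP => s; rewrite !mxE rowpolyZ linearZ. Qed.

Lemma evrow_delta0 (t : 'I_n) : evrow (delta_mx t 0) = delta_mx 0 t.
Proof.
apply/rowP => s; rewrite !mxE rowpoly_delta expr0 linearZ rmorph1 /=.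
by rewrite mulr1 rmorph_nat.
Qed.

Variables (p : {poly R}) (size_p : size p = d.+1) (root_th : (map_poly io p).[th] = 0).

Lemma evrow_regact Q M : evrow (regact p Q M) = evrow M *m evalmx Q.
Proof.
apply/rowP => s; rewrite !mxE rowpoly_regact // [evalp _]horner_map_modp //.
rewrite -[(map_poly io _).[th]]/(evalp _) rmorph_sum.
by apply: eq_bigr => t _; rewrite !mxE rmorphM.
Qed.

Lemma evalmxX : evalmx 'X%:M = th%:M.
Proof. by rewrite /evalmx map_scalar_mx /= /evalp horner_morphX. Qed.

Lemma descmx_evrow (H : 'M[R]_(n * d)) : H *m regX p n d = regX p n d *m H ->
  forall M, evrow (vec_mx (mxvec M *m H)) = evrow M *m descmx H.
Proof.
move=> HX; apply: (eq_semilinear_delta (F1 := fun M => evrow (vec_mx (mxvec M *m H)))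
                    (F2 := fun M => evrow M *m descmx H)) => /=.
- by move=> M N; rewrite linearD /= mulmxDl linearD /= evrowD.
- by move=> a M; rewrite linearZ /= -scalemxAl linearZ /= evrowZ.
- by move=> M N; rewrite evrowD mulmxDl.
- by move=> a M; rewrite evrowZ scalemxAl.
move=> t [j lt_jd]; elim: j lt_jd => [|j IH] lt_jd.
  by rewrite (_ : Ordinal lt_jd = 0) ?evrow_delta0 -?rowE ?rowK //; apply: val_inj.
rewrite -(regactX_delta size_p t (j := Ordinal (ltnW lt_jd))) //.
rewrite evrow_regact evalmxX -mul_regmx // -mulmxA -/(regX p n d) -HX mulmxA.
rewrite -[mxvec _ *m H]vec_mxK mul_regmx // mxvecK evrow_regact evalmxX IH.
by rewrite -!mulmxA scalar_mxC.
Qed.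

Lemma descmxM (H H' : 'M[R]_(n * d)) : H' *m regX p n d = regX p n d *m H' ->
  descmx (H *m H') = descmx H *m descmx H'.
Proof.
move=> H'X; apply/row_matrixP => t; rewrite row_mul !rowK mulmxA.
by rewrite -[mxvec _ *m H]vec_mxK descmx_evrow // mxvecK.
Qed.

Lemma descmx1 : descmx 1%:M = 1%:M.
Proof. by apply/row_matrixP => t; rewrite rowK mulmx1 mxvecK evrow_delta0 row1. Qed.

Lemma descmx_regmx Q : descmx (regmx p d Q) = evalmx Q.
Proof.
apply/row_matrixP => t.
by rewrite rowK mul_regmx // mxvecK evrow_regact evrow_delta0 -rowE.
Qed.

Lemma descmx_unit (H : 'M[R]_(n * d)) :
  H \in unitmx -> H *m regX p n d = regX p n d *m H -> descmx H \in unitmx.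
Proof.
move=> Hu HX; have HVX : invmx H *m regX p n d = regX p n d *m invmx H.
  rewrite -[LHS]mulmx1 -(mulmxV Hu) !mulmxA -[invmx H *m _ *m H]mulmxA -HX.
  by rewrite mulmxA mulVmx // mul1mx.
have /mulmx1_unit[] // : descmx H *m descmx (invmx H) = 1%:M.
by rewrite -descmxM // mulmxV ?descmx1.
Qed.

End Descent.

Lemma map_descmx (R R' K K' : fieldType) (sig : {rmorphism R -> R'})
    (io : {rmorphism R -> K}) (io' : {rmorphism R' -> K'}) (th : K) (th' : K')
    (kap : {rmorphism K -> K'}) :
  (forall x, kap (io x) = io' (sig x)) -> kap th = th' ->
  forall n d' (H : 'M[R]_(n * d'.+1)),
  descmx io' th' (map_mx sig H) = map_mx kap (descmx io th H).
Proof.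
move=> kap_io kap_th n d' H; apply/matrixP => t s; rewrite !mxE.
rewrite -(map_delta_mx sig) -map_mxvec -map_mxM -map_vec_mx /evalp /horner_morph.
rewrite /rowpoly -map_row -map_rVpoly -map_poly_comp -horner_map /= kap_th -map_poly_comp.
by congr (_.[_]); apply: eq_map_poly => x /=; rewrite kap_io.
Qed.

(** * Cyclic bases *)

Lemma stablemx_horner (F : fieldType) m n (V : 'M[F]_(m, n.+1)) (S : 'M[F]_n.+1) q :
  stablemx V S -> stablemx V (horner_mx S q).
Proof.
move=> VS; elim/poly_ind: q => [|q c IH]; first by rewrite rmorph0 stablemx0.
by rewrite rmorphD rmorphM /= horner_mx_X horner_mx_C stablemxD ?stablemxM ?stablemxC.
Qed.

Lemma exists_rV_notin (F : fieldType) m n (A : 'M[F]_(m, n)) :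
  ~~ row_full A -> exists v : 'rV_n, ~~ (v <= A)%MS.
Proof.
move=> notfull.
have [/existsP[i iA]|] := boolP [exists i : 'I_n, ~~ ((delta_mx 0 i : 'rV_n) <= A)%MS].
  by exists (delta_mx 0 i).
rewrite negb_exists => /forallP allA; case/negP: notfull; rewrite -sub1mx.
by apply/row_subP => i; rewrite row1 -[(_ <= _)%MS]negbK allA.
Qed.

(* A matrix [S] annihilated by an irreducible [f] of degree [d] makes [F^(n * d)]
   an [F[X]/(f)]-vector space of dimension [n]; a basis of it, written out over
   [F] as the rows [v_s * S^j], conjugates [S] to the multiplication by [X]. *)
Section KrylovBasis.
Variables (F : fieldType) (f : {poly F}) (d' n' : nat).
Hypotheses (size_f : size f = d'.+2) (irr_f : irreducible_poly f).
Local Notation d := d'.+1.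
Local Notation N := (n'.+1 * d'.+1)%N.
Variable S : 'M[F]_N.
Hypothesis root_S : horner_mx S f = 0.

Lemma horner_mx_modp q : horner_mx S (q %% f) = horner_mx S q.
Proof. by rewrite [in RHS](divp_eq q f) rmorphD rmorphM /= root_S mulr0 add0r. Qed.

Definition krylovmx k (V : 'M[F]_(k, N)) : 'M[F]_(k * d, N) :=
  \matrix_(i < k * d) \sum_(s < k)
     row s V *m horner_mx S (rowpoly (vec_mx (delta_mx 0 i : 'rV_(k * d))) s).

Lemma mul_krylovmx k (V : 'M[F]_(k, N)) w :
  w *m krylovmx V = \sum_s row s V *m horner_mx S (rowpoly (vec_mx w) s).
Proof.
rewrite mulmx_sum_row; under eq_bigr do rewrite rowK scaler_sumr.
rewrite exchange_big; apply: eq_bigr => s _.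
rewrite [in RHS](row_sum_delta w) linear_sum /=.
under [in RHS]eq_bigr do rewrite linearZ.
rewrite rowpoly_sum linear_sum mulmx_sumr.
by apply: eq_bigr => i _; rewrite linearZ scalemxAr.
Qed.

Lemma krylovmx_regX k (V : 'M[F]_(k, N)) : krylovmx V *m S = regX f k d *m krylovmx V.
Proof.
apply: row_mx_ext => w; rewrite !mulmxA mul_krylovmx mulmx_suml mul_krylovmx.
rewrite vec_mul_regmx //; apply: eq_bigr => s _.
by rewrite rowpoly_regactX // horner_mx_modp rmorphM /= horner_mx_X mulmxA.
Qed.

Lemma stablemx_krylovmx k (V : 'M[F]_(k, N)) q : stablemx (krylovmx V) (horner_mx S q).
Proof. by apply: stablemx_horner; rewrite krylovmx_regX submxMl. Qed.

(* Since [f] is irreducible and [size g <= d < size f], a nonzero [g] is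
   invertible modulo [f], so [v *m g(S)] determines [v] up to the stable space. *)
Lemma krylov_indep k (V : 'M[F]_(k, N)) (v : 'rV_N) (g : {poly F}) :
  ~~ (v <= krylovmx V)%MS -> (size g <= d)%N ->
  (v *m horner_mx S g <= krylovmx V)%MS -> g = 0.
Proof.
move=> vV size_g vgV; apply/eqP; apply: contraNT vV => g_neq0.
have cop : coprimep g f.
  rewrite coprimep_sym irreducible_poly_coprime //; apply/negP => /(dvdp_leq g_neq0).
  by rewrite size_f leqNgt ltnS size_g.
have [[u w] /= uw1] := Bezout_eq1_coprimepP _ _ cop.
have -> : v = v *m horner_mx S g *m horner_mx S u.
  have -> : v *m horner_mx S g *m horner_mx S u = v *m horner_mx S (u * g + w * f).
    rewrite rmorphD !rmorphM /= root_S mulr0 addr0 (comm_horner_mx2 S u g).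
    by rewrite -mulmxA.
  by rewrite uw1 rmorph1 mulmx1.
exact: submx_trans (submxMr _ vgV) (stablemx_krylovmx V u).
Qed.

Lemma krylovmx_extend k (V : 'M[F]_(k, N)) : (k < n'.+1)%N -> row_free (krylovmx V) ->
  exists V' : 'M[F]_(k.+1, N), row_free (krylovmx V').
Proof.
move=> lt_kn freeV; have [v vV] : exists v : 'rV_N, ~~ (v <= krylovmx V)%MS.
  apply: exists_rV_notin; rewrite /row_full neq_ltn (leq_ltn_trans (rank_leq_row _)) //.
  by rewrite ltn_pmul2r.
exists (\matrix_(s < k.+1) if unlift ord0 s is Some s' then row s' V else v).
apply: inj_row_free => w; rewrite mul_krylovmx big_ord_recl /= rowK unlift_none.
under eq_bigr do rewrite rowK liftK.
set g0 := rowpoly (vec_mx w) ord0.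
set w' := mxvec (\matrix_(s < k) row (lift ord0 s) (vec_mx w)).
have -> : \sum_(s < k) row s V *m horner_mx S (rowpoly (vec_mx w) (lift ord0 s))
          = w' *m krylovmx V.
  by rewrite mul_krylovmx; apply: eq_bigr => s _; rewrite /w' mxvecK /rowpoly rowK.
move=> /eqP; rewrite addr_eq0 => /eqP vg0.
have g00 : g0 = 0.
  by apply: (krylov_indep vV (size_poly _ _)); rewrite vg0 -mulNmx submxMl.
have w'0 : w' = 0.
  by apply: (row_free_inj freeV); rewrite mul0mx -[LHS]opprK -vg0 g00 rmorph0 mulmx0 oppr0.
suff w0 : vec_mx w = 0 by rewrite -(vec_mxK w) w0 linear0.
apply/row_matrixP => s; rewrite row0.
case: (unliftP ord0 s) => [s' ->|->].
  by have := congr1 (fun A => row s' (vec_mx A)) w'0; rewrite /w' mxvecK rowK linear0 row0.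
by rewrite -(rVpolyK (row _ _)) -[rVpoly _]/g0 g00 linear0.
Qed.

Lemma krylovmx_free k : (k <= n'.+1)%N -> exists V : 'M[F]_(k, N), row_free (krylovmx V).
Proof.
elim: k => [_ | k IH le_kn].
  exists 0; apply: inj_row_free => w _; apply/rowP => -[i lt_i0].
  by exfalso; rewrite mul0n in lt_i0.
by have [V freeV] := IH (ltnW le_kn); apply: krylovmx_extend le_kn freeV.
Qed.

Lemma conj_regX : exists2 B : 'M[F]_N, B \in unitmx & B *m S = regX f n'.+1 d *m B.
Proof.
have [V freeV] := krylovmx_free (leqnn n'.+1).
by exists (krylovmx V); [rewrite -row_free_unit | exact: krylovmx_regX].
Qed.

End KrylovBasis.

(** * Inverse limits *)

Section InverseLimit.
Variables (V Ed : finType) (l r : Ed -> V) (FV : V -> fieldType) (FE : Ed -> fieldType)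
  (jl : forall k, {rmorphism FV (l k) -> FE k}) (jr : forall k, {rmorphism FV (r k) -> FE k})
  (F : fieldType) (phi : forall i, {rmorphism F -> FV i}).
Hypothesis lim : is_inverse_limit jl jr phi.

Lemma limit_mx m n (A : forall i, 'M[FV i]_(m, n)) :
  (forall k, map_mx (jl k) (A (l k)) = map_mx (jr k) (A (r k))) ->
  exists B : 'M[F]_(m, n), forall i, map_mx (phi i) B = A i.
Proof.
case: lim => _ _ lim_ex eqA.
have entry x y : exists z : F, [forall i, phi i z == A i x y].
  have [k|z zP] := lim_ex (fun i => A i x y); last by exists z; apply/forallP => i; rewrite zP.
  by have /matrixP/(_ x y) := eqA k; rewrite !mxE.
exists (\matrix_(x, y) xchoose (entry x y)) => i; apply/matrixP => x y.
by rewrite !mxE; apply/eqP/(forallP (xchooseP (entry x y))).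
Qed.

Lemma limit_poly d (q : forall i, {poly FV i}) :
  (forall i, size (q i) <= d)%N ->
  (forall k, map_poly (jl k) (q (l k)) = map_poly (jr k) (q (r k))) ->
  exists Q : {poly F}, forall i, map_poly (phi i) Q = q i.
Proof.
move=> size_q eq_q; have [|B BP] := limit_mx (A := fun i => poly_rV (q i) : 'rV_d).
  by move=> k; rewrite !map_poly_rV eq_q.
by exists (rVpoly B) => i; rewrite map_rVpoly BP poly_rV_K.
Qed.

End InverseLimit.

(** * The extended factorization inverse system *)

Section FactorSystem.
Local Unset Implicit Arguments.
Context {V Ed : finType} {l r : Ed -> V} {FV : V -> fieldType} {FE : Ed -> fieldType}
  {jl : forall k, {rmorphism FV (l k) -> FE k}} {jr : forall k, {rmorphism FV (r k) -> FE k}}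
  {F : fieldType} {phi : forall i, {rmorphism F -> FV i}}.
Hypothesis HFIS : is_FIS jl jr phi.
Context {f : {poly F}}.
Hypotheses (Hirr : irreducible_poly f) (Hsep : separable_poly f).
Context {E : fieldType} {iotaE : {rmorphism F -> E}} {thetaE : E}.
Hypothesis HE : presents iotaE thetaE f.
Context {nV : V -> nat} {fV : forall i, 'I_(nV i) -> {poly FV i}}.
Hypothesis HfV : forall i, map_poly (phi i) f = \prod_(b < nV i) fV i b.
Context {nE : Ed -> nat} {fE : forall k, 'I_(nE k) -> {poly FE k}}.
Hypothesis HfE : forall k, map_poly (jl k \o phi (l k)) f = \prod_(a < nE k) fE k a.
Hypothesis HfEirr : forall k a, fE k a \is monic /\ irreducible_poly (fE k a).
Context {EV : forall i, 'I_(nV i) -> fieldType}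
  {iotaV : forall i b, {rmorphism FV i -> EV i b}} {thetaV : forall i b, EV i b}.
Hypothesis HEV : forall i b, presents (iotaV i b) (thetaV i b) (fV i b).
Context {EE : forall k, 'I_(nE k) -> fieldType}
  {iotaEE : forall k a, {rmorphism FE k -> EE k a}} {thetaEE : forall k a, EE k a}.
Hypothesis HEE : forall k a, presents (iotaEE k a) (thetaEE k a) (fE k a).

Local Notation pV i := (map_poly (phi i) f).
Local Notation pE k := (map_poly (jl k \o phi (l k)) f).

Lemma FIS_limit : is_inverse_limit jl jr phi.
Proof. by case: HFIS. Qed.

Lemma phi_compat k x : jl k (phi (l k) x) = jr k (phi (r k) x).
Proof. by case: FIS_limit. Qed.

Lemma pE_l k : map_poly (jl k) (pV (l k)) = pE k.
Proof. by rewrite map_poly_comp. Qed.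

Lemma pE_r k : map_poly (jr k) (pV (r k)) = pE k.
Proof. by rewrite -map_poly_comp; apply: eq_map_poly => x /=; rewrite phi_compat. Qed.

Lemma fE_dvd k a : fE k a %| pE k.
Proof. by rewrite HfE (bigD1 a) //= dvdp_mulr. Qed.

Lemma factor_match {i k} {j : {rmorphism FV i -> FE k}} :
  map_poly j (pV i) = pE k -> forall a : 'I_(nE k),
  {b | forall b', fE k a %| map_poly j (fV i b') <-> b' = b}.
Proof.
move=> jpV a; apply: sep_factor_match; rewrite -?HfV ?jpV ?separable_map ?fE_dvd //.
exact: (HfEirr k a).2.
Qed.

Definition bl k a := sval (factor_match (pE_l k) a).
Definition br k a := sval (factor_match (pE_r k) a).

Lemma bl_spec k a b : fE k a %| map_poly (jl k) (fV (l k) b) <-> b = bl k a.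
Proof. exact: svalP (factor_match (pE_l k) a) b. Qed.

Lemma br_spec k a b : fE k a %| map_poly (jr k) (fV (r k) b) <-> b = br k a.
Proof. exact: svalP (factor_match (pE_r k) a) b. Qed.

Lemma edge_root {i k} {j : {rmorphism FV i -> FE k}} {a b} :
  fE k a %| map_poly j (fV i b) -> (map_poly (iotaEE k a \o j) (fV i b)).[thetaEE k a] = 0.
Proof. by rewrite map_poly_comp => /(HEE k a).2. Qed.

Lemma pV_root i b : (map_poly (iotaV i b) (pV i)).[thetaV i b] = 0.
Proof. by apply/(HEV i b).2; rewrite HfV (bigD1 b) //= dvdp_mulr. Qed.

Lemma vertex_root i b : (map_poly (iotaV i b \o phi i) f).[thetaV i b] = 0.
Proof. by rewrite map_poly_comp pV_root. Qed.

Definition kl k a := plift (HEV (l k) (bl k a)) (edge_root ((bl_spec k a _).2 erefl)).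
Definition kr k a := plift (HEV (r k) (br k a)) (edge_root ((br_spec k a _).2 erefl)).
Definition rho i b := plift HE (vertex_root i b).

Lemma kl_iota k a x : kl k a (iotaV (l k) (bl k a) x) = iotaEE k a (jl k x).
Proof. exact: plift_iota. Qed.

Lemma kl_theta k a : kl k a (thetaV (l k) (bl k a)) = thetaEE k a.
Proof. exact: plift_theta. Qed.

Lemma kr_iota k a x : kr k a (iotaV (r k) (br k a) x) = iotaEE k a (jr k x).
Proof. exact: plift_iota. Qed.

Lemma kr_theta k a : kr k a (thetaV (r k) (br k a)) = thetaEE k a.
Proof. exact: plift_theta. Qed.

Lemma rho_iota i b x : rho i b (iotaE x) = iotaV i b (phi i x).
Proof. exact: plift_iota. Qed.

Lemma rho_theta i b : rho i b thetaE = thetaV i b.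
Proof. exact: plift_theta. Qed.

Lemma klE k a q : kl k a (map_poly (iotaV (l k) (bl k a)) q).[thetaV (l k) (bl k a)] =
  (map_poly (iotaEE k a) (map_poly (jl k) q)).[thetaEE k a].
Proof. by rewrite pliftE map_poly_comp. Qed.

Lemma krE k a q : kr k a (map_poly (iotaV (r k) (br k a)) q).[thetaV (r k) (br k a)] =
  (map_poly (iotaEE k a) (map_poly (jr k) q)).[thetaEE k a].
Proof. by rewrite pliftE map_poly_comp. Qed.

Lemma rhoE i b q :
  rho i b (map_poly iotaE q).[thetaE] = (map_poly (iotaV i b) (map_poly (phi i) q)).[thetaV i b].
Proof. by rewrite pliftE map_poly_comp. Qed.

Lemma nV_gt0 i : (0 < nV i)%N.
Proof.
have := HfV i; case: (nV i) (fV i) => // g; rewrite big_ord0 => f1.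
by case: Hirr; rewrite -(size_map_poly (phi i)) f1 size_poly1.
Qed.

Lemma sigma_card_gt0 : (0 < #|{: {i : V & 'I_(nV i)}}|)%N.
Proof.
case: HFIS => /card_gt0P[i _] _ _.
by apply/card_gt0P; exists (Tagged (fun i => 'I_(nV i)) (Ordinal (nV_gt0 i))).
Qed.

Lemma rho_compat k a x :
  kl k a (rho (l k) (bl k a) x) = kr k a (rho (r k) (br k a) x).
Proof.
have [q ->] := HE.1 x; rewrite !rhoE klE krE -!map_poly_comp.
by congr (_.[_]); apply: eq_map_poly => y /=; rewrite phi_compat.
Qed.

Lemma rho_inj x y :
  (forall i' : {i : V & 'I_(nV i)}, rho (tag i') (tagged i') x = rho (tag i') (tagged i') y) ->
  x = y.
Proof.
case: HFIS => /card_gt0P[i _] _ _.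
by move/(_ (Tagged (fun i => 'I_(nV i)) (Ordinal (nV_gt0 i)))); apply: fmorph_inj.
Qed.

Lemma vertex_interp i (A : forall b, EV i b) :
  exists2 q : {poly FV i}, (size q < size f)%N &
    forall b, (map_poly (iotaV i b) q).[thetaV i b] = A b.
Proof.
pose y b := xchoose (presents_surj (HEV i b) (A b)).
have [|z zP] := chinese_sep_prod (s := index_enum 'I_(nV i)) (g := fV i) _ y.
  by rewrite -HfV separable_map.
have pV_neq0 : pV i != 0 by rewrite map_poly_eq0 -size_poly_gt0 ltnW // Hirr.1.
exists (z %% pV i); first by rewrite -(size_map_poly (phi i)) ltn_modp.
move=> b; rewrite horner_map_modp ?pV_root //.
have /(HEV i b).2 : fV i b %| z - y b by rewrite zP ?mem_index_enum.
rewrite rmorphB hornerD hornerN => /eqP; rewrite subr_eq0 => /eqP ->.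
by apply/esym/eqP/(xchooseP (presents_surj (HEV i b) (A b))).
Qed.

Lemma rho_surj (A : forall i' : {i : V & 'I_(nV i)}, EV (tag i') (tagged i')) :
  (forall k' : {k : Ed & 'I_(nE k)},
     kl (tag k') (tagged k') (A (Tagged (fun i => 'I_(nV i)) (bl (tag k') (tagged k')))) =
     kr (tag k') (tagged k') (A (Tagged (fun i => 'I_(nV i)) (br (tag k') (tagged k'))))) ->
  exists x : E, forall i', rho (tag i') (tagged i') x = A i'.
Proof.
move=> eqA; pose Ai i (b : 'I_(nV i)) := A (Tagged (fun i => 'I_(nV i)) b).
have ex_q i : exists q : {poly FV i}, (size q < size f)%N &&
    [forall b, (map_poly (iotaV i b) q).[thetaV i b] == Ai i b].
  have [q size_q qP] := vertex_interp i (Ai i).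
  by exists q; rewrite size_q; apply/forallP => b; rewrite qP.
pose q i := xchoose (ex_q i).
have qP i : (size (q i) < size f)%N /\ forall b, (map_poly (iotaV i b) (q i)).[thetaV i b] = Ai i b.
  by have /andP[-> /forallP qP] := xchooseP (ex_q i); split=> // b; apply/eqP/qP.
have [||Q QP] := limit_poly (d := size f) (q := q) FIS_limit.
- by move=> i; rewrite ltnW ?(qP i).1.
- move=> k; apply/eqP; rewrite -subr_eq0; apply/eqP/(dvdp_size_lt_eq0 (p := pE k)).
    rewrite (leq_ltn_trans (size_add _ _)) // size_opp !size_map_poly gtn_max.
    by rewrite !(qP _).1.
  rewrite HfE; apply: dvdp_sep_prod => [|a _]; first by rewrite -HfE separable_map.
  apply/(HEE k a).2; rewrite rmorphB hornerD hornerN -klE -krE !(qP _).2.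
  by rewrite (eqA (Tagged (fun k => 'I_(nE k)) a)) subrr.
exists (map_poly iotaE Q).[thetaE] => -[i b] /=.
by rewrite rhoE QP (qP i).2.
Qed.

Lemma FIS_ext :
  @is_FIS {i : V & 'I_(nV i)} {k : Ed & 'I_(nE k)}
    (fun k' => Tagged (fun i => 'I_(nV i)) (bl (tag k') (tagged k')))
    (fun k' => Tagged (fun i => 'I_(nV i)) (br (tag k') (tagged k')))
    (fun i' => EV (tag i') (tagged i')) (fun k' => EE (tag k') (tagged k'))
    (fun k' => kl (tag k') (tagged k')) (fun k' => kr (tag k') (tagged k'))
    E (fun i' => rho (tag i') (tagged i')).
Proof.
split; [exact: sigma_card_gt0 | | split; [by case=> k a x; apply: rho_compat | exact: rho_inj
                                          | exact: rho_surj]].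
case: HFIS => _ no_loop _ [k a] /=; apply: contra_neq (no_loop k).
exact: (congr1 tag).
Qed.

Local Notation d' := (size f).-2.
Local Notation XV n i := (regX (pV i) n d'.+1).
Local Notation XE n k := (regX (pE k) n d'.+1).

Lemma size_f : size f = d'.+2.
Proof. by case: Hirr; case: (size f) => [|[]]. Qed.

Lemma size_pV i : size (pV i) = d'.+2.
Proof. by rewrite size_map_poly size_f. Qed.

Lemma size_pE k : size (pE k) = d'.+2.
Proof. by rewrite size_map_poly size_f. Qed.

Lemma pE_root k a : (map_poly (iotaEE k a) (pE k)).[thetaEE k a] = 0.
Proof. exact/(HEE k a).2/fE_dvd. Qed.

Lemma edge_polymx k n (h : forall a : 'I_(nE k), 'M[EE k a]_n) :
  {Q : 'M[{poly FE k}]_n | forall a, evalmx (iotaEE k a) (thetaEE k a) Q = h a}.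
Proof.
have entry t s : exists z : {poly FE k},
    [forall a, evalp (iotaEE k a) (thetaEE k a) z == h a t s].
  pose y a := xchoose (presents_surj (HEE k a) (h a t s)).
  have [|z zP] := chinese_sep_prod (s := index_enum 'I_(nE k)) (g := fE k) _ y.
    by rewrite -HfE separable_map.
  exists z; apply/forallP => a; rewrite /evalp /horner_morph.
  have /(HEE k a).2 : fE k a %| z - y a by rewrite zP ?mem_index_enum.
  rewrite rmorphB hornerD hornerN => /eqP; rewrite subr_eq0 => /eqP ->.
  by rewrite eq_sym; apply: (xchooseP (presents_surj (HEE k a) (h a t s))).
exists (\matrix_(t, s) xchoose (entry t s)) => a; apply/matrixP => t s.
by rewrite !mxE; apply/eqP/(forallP (xchooseP (entry t s))).
Qed.

Lemma edge_regmx_unit k n (Q Q' : 'M[{poly FE k}]_n) :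
  (forall a, evalmx (iotaEE k a) (thetaEE k a) (Q *m Q') = 1%:M) ->
  regmx (pE k) d'.+1 Q \in unitmx.
Proof.
move=> QQ'1; suff /mulmx1_unit[] : regmx (pE k) d'.+1 Q *m regmx (pE k) d'.+1 Q' = 1%:M by [].
rewrite regmxM ?size_pE // -(regmx1 n (size_pE k)); apply: regmx_mod => [|t s].
  exact: size_pE.
rewrite HfE; apply: dvdp_sep_prod => [|a _]; first by rewrite -HfE separable_map.
apply/(HEE k a).2; rewrite rmorphB hornerD hornerN.
have /matrixP/(_ t s) := QQ'1 a; rewrite !mxE /evalp /horner_morph => ->.
by rewrite rmorph_nat hornerMn hornerE subrr.
Qed.

Lemma edge_lift k n (g : forall a : 'I_(nE k), 'M[EE k a]_n) :
  (forall a, g a \in unitmx) ->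
  {G : 'M[FE k]_(n * d'.+1) | [/\ G \in unitmx, G *m XE n k = XE n k *m G
    & forall a, descmx (iotaEE k a) (thetaEE k a) G = g a]}.
Proof.
move=> gu; have [Q QP] := edge_polymx k n g.
have [Q' Q'P] := edge_polymx k n (fun a => invmx (g a)).
exists (regmx (pE k) d'.+1 Q); split.
- by apply: (edge_regmx_unit k n Q Q') => a; rewrite evalmxM QP Q'P mulmxV ?gu.
- by rewrite regX_comm // size_pE.
by move=> a; rewrite descmx_regmx ?QP ?size_pE ?pE_root.
Qed.

Lemma conj_descends n (G : forall k, 'M[FE k]_(n.+1 * d'.+1))
    (G' : forall i, 'M[FV i]_(n.+1 * d'.+1)) :
  (forall k, G k \in unitmx) -> (forall k, G k *m XE n.+1 k = XE n.+1 k *m G k) ->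
  (forall i, G' i \in unitmx) ->
  (forall k, map_mx (jl k) (G' (l k)) = map_mx (jr k) (G' (r k)) *m G k) ->
  exists2 S : 'M[F]_(n.+1 * d'.+1),
    forall i, map_mx (phi i) S = G' i *m XV n.+1 i *m invmx (G' i) & horner_mx S f = 0.
Proof.
move=> Gu GX G'u G'G.
have [k|S SP] := limit_mx FIS_limit (A := fun i => G' i *m XV n.+1 i *m invmx (G' i)).
  rewrite /= !map_mxM !map_invmx !map_regX pE_l pE_r G'G invmxM ?map_unitmx ?G'u ?Gu //.
  by rewrite -!mulmxA; congr (_ *m _); rewrite mulmxA GX -mulmxA mulKVmx ?Gu.
exists S => //; case: HFIS => /card_gt0P[i _] _ _.
apply: (map_mx_inj (f := phi i)); rewrite map_horner_mx SP horner_mx_uconj ?G'u //.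
by rewrite horner_regX_root ?size_pV // mulmx0 mul0mx map_mx0.
Qed.

(* A basis [B] of [F^(n * d)] over [E], conjugating [S] to [X], turns the [G' i]
   into matrices [H i] that commute with [X], i.e. are [F_i[X]/(f)]-linear. *)
Lemma vertex_lift n (G : forall k, 'M[FE k]_(n.+1 * d'.+1))
    (G' : forall i, 'M[FV i]_(n.+1 * d'.+1)) :
  (forall k, G k \in unitmx) -> (forall k, G k *m XE n.+1 k = XE n.+1 k *m G k) ->
  (forall i, G' i \in unitmx) ->
  (forall k, map_mx (jl k) (G' (l k)) = map_mx (jr k) (G' (r k)) *m G k) ->
  exists H : forall i, 'M[FV i]_(n.+1 * d'.+1),
    [/\ forall i, H i \in unitmx, forall i, H i *m XV n.+1 i = XV n.+1 i *m H i
      & forall k, map_mx (jr k) (H (r k)) *m G k = map_mx (jl k) (H (l k))].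
Proof.
move=> Gu GX G'u G'G; have [S SP S0] := conj_descends n G G' Gu GX G'u G'G.
have [B Bu BS] := conj_regX size_f Hirr S0.
exists (fun i => map_mx (phi i) B *m G' i); split=> [i | i | k].
- by rewrite unitmx_mul map_unitmx Bu G'u.
- have BSi : map_mx (phi i) B *m map_mx (phi i) S = XV n.+1 i *m map_mx (phi i) B.
    by rewrite -map_mxM BS map_mxM map_regX.
  have G'X : G' i *m XV n.+1 i = map_mx (phi i) S *m G' i by rewrite SP mulmxKV ?G'u.
  by rewrite -mulmxA G'X mulmxA BSi -mulmxA.
rewrite !map_mxM -mulmxA -G'G -!map_mx_comp; congr (_ *m _).
by apply: eq_map_mx => x /=; rewrite phi_compat.
Qed.

Lemma patching_ext : patching jl jr ->
  @patching {i : V & 'I_(nV i)} {k : Ed & 'I_(nE k)}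
    (fun k' => Tagged (fun i => 'I_(nV i)) (bl (tag k') (tagged k')))
    (fun k' => Tagged (fun i => 'I_(nV i)) (br (tag k') (tagged k')))
    (fun i' => EV (tag i') (tagged i')) (fun k' => EE (tag k') (tagged k'))
    (fun k' => kl (tag k') (tagged k')) (fun k' => kr (tag k') (tagged k')).
Proof.
move=> patchF [//|n] _ g gu; pose gk k (a : 'I_(nE k)) := g (Tagged (fun k => 'I_(nE k)) a).
pose G k := sval (edge_lift k n.+1 (gk k) (fun a => gu (Tagged _ a))).
have /all_and3[Gu GX Gg] k := svalP (edge_lift k n.+1 (gk k) (fun a => gu (Tagged _ a))).
have [G' [G'u G'G]] := patchF _ (muln_gt0 n.+1 d'.+1) G Gu.
have {}G'G k : map_mx (jl k) (G' (l k)) = map_mx (jr k) (G' (r k)) *m G k.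
  by rewrite G'G mulKVmx ?map_unitmx ?G'u.
have [H [Hu HX HG]] := vertex_lift n G G' Gu GX G'u G'G.
have Hdu i b : descmx (iotaV i b) (thetaV i b) (H i) \in unitmx.
  exact: descmx_unit (size_pV i) (pV_root i b) _ (Hu i) (HX i).
exists (fun i' => descmx (iotaV (tag i') (tagged i')) (thetaV (tag i') (tagged i')) (H (tag i'))).
split=> [[i b] | [k a]] //=.
rewrite -(map_descmx (kl_iota k a) (kl_theta k a)) -(map_descmx (kr_iota k a) (kr_theta k a)).
rewrite -HG (descmxM (size_pE k) (pE_root k a)) // Gg mulKmx //.
by rewrite (map_descmx (kr_iota k a) (kr_theta k a)) map_unitmx Hdu.
Qed.

End FactorSystem.

Theorem mainTheorem11
  (V Ed : finType) (l r : Ed -> V)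
  (FV : V -> fieldType) (FE : Ed -> fieldType)
  (jl : forall k, {rmorphism FV (l k) -> FE k})
  (jr : forall k, {rmorphism FV (r k) -> FE k})
  (F : fieldType) (phi : forall i, {rmorphism F -> FV i})
  (HFIS : is_FIS jl jr phi)
  (f : {poly F}) (Hmonic : f \is monic) (Hirr : irreducible_poly f)
  (Hsep : separable_poly f)
  (E : fieldType) (iotaE : {rmorphism F -> E}) (thetaE : E)
  (HE : presents iotaE thetaE f)
  (* factorization of f over each F_i into monic irreducibles f_(i,b), b < nV i *)
  (nV : V -> nat) (fV : forall i, 'I_(nV i) -> {poly FV i})
  (HfV : forall i, map_poly (phi i) f = \prod_(b < nV i) fV i b)
  (HfVirr : forall i b, fV i b \is monic /\ irreducible_poly (fV i b))
  (* factorization of f over each F_k into monic irreducibles f_(k,a), a < nE k *)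
  (nE : Ed -> nat) (fE : forall k, 'I_(nE k) -> {poly FE k})
  (HfE : forall k, map_poly (jl k \o phi (l k)) f = \prod_(a < nE k) fE k a)
  (HfEirr : forall k a, fE k a \is monic /\ irreducible_poly (fE k a))
  (* E_(i,b) = F_i[X]/(f_(i,b)) and E_(k,a) = F_k[X]/(f_(k,a)) *)
  (EV : forall i, 'I_(nV i) -> fieldType)
  (iotaV : forall i b, {rmorphism FV i -> EV i b}) (thetaV : forall i b, EV i b)
  (HEV : forall i b, presents (iotaV i b) (thetaV i b) (fV i b))
  (EE : forall k, 'I_(nE k) -> fieldType)
  (iotaEE : forall k a, {rmorphism FE k -> EE k a}) (thetaEE : forall k a, EE k a)
  (HEE : forall k a, presents (iotaEE k a) (thetaEE k a) (fE k a)) :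
  (* Gamma': the edge (k,a) is incident to (l k, bl k a) and (r k, br k a),
     and to no other vertex *)
  exists (bl : forall k, 'I_(nE k) -> 'I_(nV (l k)))
         (br : forall k, 'I_(nE k) -> 'I_(nV (r k))),
    (forall k a (b : 'I_(nV (l k))),
        fE k a %| map_poly (jl k) (fV (l k) b) <-> b = bl k a) /\
    (forall k a (b : 'I_(nV (r k))),
        fE k a %| map_poly (jr k) (fV (r k) b) <-> b = br k a) /\
    (* the inclusions E_(i',) -> E_(k') extending F_i -> F_k, X |-> X *)
    exists (kl : forall k a, {rmorphism EV (l k) (bl k a) -> EE k a})
           (kr : forall k a, {rmorphism EV (r k) (br k a) -> EE k a})
           (rho : forall i b, {rmorphism E -> EV i b}),
      (forall k a x, kl k a (iotaV (l k) (bl k a) x) = iotaEE k a (jl k x)) /\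
      (forall k a, kl k a (thetaV (l k) (bl k a)) = thetaEE k a) /\
      (forall k a x, kr k a (iotaV (r k) (br k a) x) = iotaEE k a (jr k x)) /\
      (forall k a, kr k a (thetaV (r k) (br k a)) = thetaEE k a) /\
      (forall i b x, rho i b (iotaE x) = iotaV i b (phi i x)) /\
      (forall i b, rho i b thetaE = thetaV i b) /\
      (* E is a factorization inverse system with inverse limit E *)
      @is_FIS {i : V & 'I_(nV i)} {k : Ed & 'I_(nE k)}
        (fun k' => Tagged (fun i => 'I_(nV i)) (bl (tag k') (tagged k')))
        (fun k' => Tagged (fun i => 'I_(nV i)) (br (tag k') (tagged k')))
        (fun i' => EV (tag i') (tagged i'))
        (fun k' => EE (tag k') (tagged k'))
        (fun k' => kl (tag k') (tagged k'))
        (fun k' => kr (tag k') (tagged k'))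
        E (fun i' => rho (tag i') (tagged i')) /\
      (* patching over F implies patching over E *)
      (patching jl jr ->
       @patching {i : V & 'I_(nV i)} {k : Ed & 'I_(nE k)}
        (fun k' => Tagged (fun i => 'I_(nV i)) (bl (tag k') (tagged k')))
        (fun k' => Tagged (fun i => 'I_(nV i)) (br (tag k') (tagged k')))
        (fun i' => EV (tag i') (tagged i'))
        (fun k' => EE (tag k') (tagged k'))
        (fun k' => kl (tag k') (tagged k'))
        (fun k' => kr (tag k') (tagged k'))).
Proof.
exists (bl Hsep HfV HfE HfEirr), (br HFIS Hsep HfV HfE HfEirr).
split; first exact: bl_spec.
split; first exact: br_spec.
exists (kl Hsep HfV HfE HfEirr HEV HEE), (kr HFIS Hsep HfV HfE HfEirr HEV HEE), (rho HE HfV HEV).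
split; first exact: kl_iota.
split; first exact: kl_theta.
split; first exact: kr_iota.
split; first exact: kr_theta.
split; first exact: rho_iota.
split; first exact: rho_theta.
split; [exact: FIS_ext | exact: patching_ext].
Qed.
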